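(* Consider a computationally efficient prover in the compiled mixed-versus-pure basis test (described in the context) that wins with probability $1-\epsilon$. For $W\in\{X,Z\}$ let $\psi^{\mathsf{Enc}(W)} := \mathbb{E}_{sk\leftarrow\mathsf{Gen}(1^\lambda)}\mathbb{E}_{c\leftarrow\mathsf{Enc}_{sk}(W)}\sum_\alpha \psi^c_\alpha$. Then for every $b\in\{0,1\}^n$ and $W\in\{X,Z\}$, \[ \big\| W(b)\,\psi^{\mathsf{Enc}(W)}\,W(b) - \psi^{\mathsf{Enc}(W)}\big\|_1 \le O(\sqrt{\epsilon}). \]
   Context: Let $(\mathsf{Gen},\mathsf{Enc},\mathsf{Dec})$ be the (classical-message part of a) quantum homomorphic encryption scheme with security parameter $\lambda$. Prover model: the prover has an initial state $\psi$ on a finite-dimensional Hilbert space $\mathcal{H}$; for each classical string $c$ it has operators $\{A^c_\alpha\}_\alpha$ such that $\{(A^c_\alpha)^\dagger A^c_\alpha\}_\alpha$ is a projective measurement, and on first-round message $c$ it answers $\alpha$ leaving the unnormalised post-measurement state $\psi^c_\alpha := A^c_\alpha\psi(A^c_\alpha)^\dagger$. In the second round, on plaintext question $W\in\{X,Z\}$ it applies a projective measurement $\{P^W_u\}_{u\in\{0,1\}^n}$, and on plaintext question $w \in \{\mathds{1},X,Z\}^n$ it applies a projective measurement $\{M^w_u\}_{u\in\{0,1\}^n}$ with $M^w_u = 0$ whenever $w_i = \mathds{1}$ and $u_i=1$ for some $i$. Compiled mixed-versus-pure basis test (with a distribution $D$ on $\{\mathds{1},X,Z\}^n$): the verifier samples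 $sk\leftarrow\mathsf{Gen}(1^\lambda)$ and $W\in\{X,Z\}$ uniformly, sends $c \leftarrow \mathsf{Enc}_{sk}(W)$, receives $\alpha$ and sets $u = \mathsf{Dec}_{sk}(\alpha)\in\{0,1\}^n$; it then samples a uniform bit $\beta$. If $\beta=0$ it sends $W$, receives $v$ (outcome of $\{P^W_v\}$), and accepts iff $u = v$. If $\beta=1$ it samples $w\sim D$, sends $w$, receives $v$ (outcome of $\{M^w_v\}$), and accepts iff $u_i = v_i$ for all $i$ with $w_i = W$. For $W \in\{X,Z\}$ and $b\in\{0,1\}^n$, $W(b) := \sum_u (-1)^{u\cdot b}P^W_u$. $\|\cdot\|_1$ is the trace norm. *)

From HB Require Import structures.
From mathcomp Require Import all_boot all_order all_algebra.
Set Implicit Arguments. Unset Strict Implicit. Unset Printing Implicit Defensive.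
Import Order.TTheory GRing.Theory Num.Theory.
Local Open Scope ring_scope.

Section Defs.
Variable C : numClosedFieldType.

Definition adjmx {m p} (A : 'M[C]_(m, p)) : 'M[C]_(p, m) := (map_mx Num.conj A)^T.

(* trace norm  ||A||_1 = tr sqrt(A^* A) = sum of square roots of the
   eigenvalues of the (normal, PSD) matrix A^* A, via the spectral theorem *)
Definition trnorm {d} (A : 'M[C]_d) : C :=
  \sum_i sqrtC (spectral_diag (adjmx A *m A) 0 i).

Definition projmeas {d} {I : finType} (P : I -> 'M[C]_d) : Prop :=
  [/\ forall i, adjmx (P i) = P i,
      forall i j, P i *m P j = (if i == j then P i else 0)
    & \sum_i P i = 1%:M].

Definition density {d} (psi : 'M[C]_d) : Prop :=
  [/\ adjmx psi = psi,
      forall v : 'cV[C]_d, 0 <= (adjmx v *m psi *m v) 0 0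
    & \tr psi = 1].

Definition distr {I : finType} (p : I -> C) : Prop :=
  (forall i, 0 <= p i) /\ \sum_i p i = 1.
End Defs.

(* Encoding conventions:
   - the basis letter W in {X,Z} is a bool:  false = X, true = Z;
   - a letter in {1,X,Z} is an option bool:  None = 1 (identity), Some W = W;
   - bit strings in {0,1}^n are {ffun 'I_n -> bool}. *)
Definition bX := false.
Definition bZ := true.

Definition Wobs {C : numClosedFieldType} {d n : nat}
  (P : bool -> {ffun 'I_n -> bool} -> 'M[C]_d) (W : bool)
  (b : {ffun 'I_n -> bool}) : 'M[C]_d :=
  \sum_(u : {ffun 'I_n -> bool}) ((-1) ^+ (\sum_i (u i && b i))%N) *: P W u.

Definition postst {C : numClosedFieldType} {d : nat} {Ct Al : finType}
  (A : Ct -> Al -> 'M[C]_d) (psi : 'M[C]_d) c a : 'M[C]_d :=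
  A c a *m psi *m adjmx (A c a).

Definition psiEnc {C : numClosedFieldType} {d : nat} {SK Ct Al : finType}
  (pGen : SK -> C) (pEnc : SK -> bool -> Ct -> C)
  (A : Ct -> Al -> 'M[C]_d) (psi : 'M[C]_d) (W : bool) : 'M[C]_d :=
  \sum_sk pGen sk *: \sum_c pEnc sk W c *: \sum_a postst A psi c a.

Definition winprob {C : numClosedFieldType} {d n : nat} {SK Ct Al : finType}
  (pGen : SK -> C) (pEnc : SK -> bool -> Ct -> C)
  (Dec : SK -> Al -> {ffun 'I_n -> bool})
  (D : {ffun 'I_n -> option bool} -> C)
  (A : Ct -> Al -> 'M[C]_d) (psi : 'M[C]_d)
  (P : bool -> {ffun 'I_n -> bool} -> 'M[C]_d)
  (M : {ffun 'I_n -> option bool} -> {ffun 'I_n -> bool} -> 'M[C]_d) : C :=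
  \sum_sk pGen sk *
  \sum_(W : bool) 2^-1 *
  \sum_c pEnc sk W c *
  \sum_a
    (2^-1 * \tr (P W (Dec sk a) *m postst A psi c a)
     + 2^-1 * \sum_(w : {ffun 'I_n -> option bool}) D w *
         \sum_(v : {ffun 'I_n -> bool}) (if [forall i, (w i == Some W) ==> (Dec sk a i == v i)]
                 then \tr (M w v *m postst A psi c a) else 0)).

(* Let O := W(b), a Hermitian unitary, and pick a contraction Z with
   ||O rho O - rho||_1 = tr((O rho O - rho) Z) (polar decomposition).  The right
   side is linear in rho = psi^{Enc(W)}, so it is the first-round mean of the same
   quantity for the post-measurement states psi^c_alpha.  For each of them let
   Pi := P^W_{Dec(alpha)} and s := (-1)^{Dec(alpha).b}, so that O Pi = s Pi and
   F := O - s satisfies F Pi = 0.  In the form <U, V> := tr(U psi^c_alpha V^dagger),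
   tr((O psi^c_alpha O - psi^c_alpha) Z) = <Z, s F> + <Z F, O>, and AM-GM bounds
   its real part by mu tr(psi^c_alpha) + (4 / mu) tr((1 - Pi) psi^c_alpha).
   Averaging, the last trace becomes the failure probability of the pure-basis
   check for W, which is at most 4 eps since failing it loses at least 1/4 of the
   winning probability; mu := 4 sqrt eps gives the bound 8 sqrt eps. *)

From HB Require Import structures.
From mathcomp Require Import all_boot all_order all_algebra.
From mathcomp Require Import spectral ring.
Set Implicit Arguments. Unset Strict Implicit. Unset Printing Implicit Defensive.
Import Order.TTheory GRing.Theory Num.Theory.
Local Open Scope ring_scope.

Lemma ler_add_sqr_div_inf (F : numFieldType) (x a : F) : 0 <= a ->
  (forall mu, 0 < mu -> x <= mu + a ^+ 2 / mu) -> x <= a *+ 2.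
Proof.
move=> a_ge0 x_le; apply/ler_addgt0Pr => t t_gt0.
have at_gt0 : 0 < a + t by rewrite ltr_wpDl.
apply: le_trans (x_le _ at_gt0) _; rewrite mulr2n [leRHS]addrAC lerD2l.
by rewrite ler_pdivrMr // expr2 ler_wpM2l // lerDl ltW.
Qed.

Section Adjoint.
Variable C : numClosedFieldType.

Lemma adjmxM m n p (A : 'M[C]_(m, n)) (B : 'M[C]_(n, p)) :
  adjmx (A *m B) = adjmx B *m adjmx A.
Proof. by rewrite /adjmx map_mxM trmx_mul. Qed.

Lemma adjmxK m n (A : 'M[C]_(m, n)) : adjmx (adjmx A) = A.
Proof. by apply/matrixP => i j; rewrite !mxE conjCK. Qed.

Lemma adjmxD m n (A B : 'M[C]_(m, n)) : adjmx (A + B) = adjmx A + adjmx B.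
Proof. by apply/matrixP => i j; rewrite !mxE rmorphD. Qed.

Lemma adjmxZ m n a (A : 'M[C]_(m, n)) : adjmx (a *: A) = a^* *: adjmx A.
Proof. by apply/matrixP => i j; rewrite !mxE rmorphM. Qed.

Lemma adjmxN m n (A : 'M[C]_(m, n)) : adjmx (- A) = - adjmx A.
Proof. by rewrite -scaleN1r adjmxZ rmorphN1 scaleN1r. Qed.

Lemma adjmxB m n (A B : 'M[C]_(m, n)) : adjmx (A - B) = adjmx A - adjmx B.
Proof. by rewrite adjmxD adjmxN. Qed.

Lemma adjmx_sum m n (I : finType) (F : I -> 'M[C]_(m, n)) :
  adjmx (\sum_i F i) = \sum_i adjmx (F i).
Proof.
apply/matrixP => i j; rewrite !mxE !summxE rmorph_sum.
by apply: eq_bigr => k _; rewrite !mxE.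
Qed.

Lemma adjmx_scalar n a : adjmx (a%:M : 'M[C]_n) = a^*%:M.
Proof.
by apply/matrixP => i j; rewrite !mxE eq_sym; case: eqP; rewrite ?rmorph0.
Qed.

Lemma adjmx1 n : adjmx (1%:M : 'M[C]_n) = 1%:M.
Proof. by rewrite adjmx_scalar rmorph1. Qed.

Lemma adjmx_diag n (v : 'rV[C]_n) : adjmx (diag_mx v) = diag_mx (map_mx Num.conj v).
Proof. by rewrite /adjmx map_diag_mx tr_diag_mx. Qed.

Lemma adjmx_trmxC m n (A : 'M[C]_(m, n)) : adjmx A = (A ^t*)%sesqui.
Proof. by rewrite /adjmx map_trmx. Qed.

Lemma mxtrace_adjmx n (A : 'M[C]_n) : \tr (adjmx A) = (\tr A)^*.
Proof. by rewrite mxtrace_tr rmorph_sum; apply: eq_bigr => i _; rewrite mxE. Qed.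

End Adjoint.

Section TraceForm.
Variables (C : numClosedFieldType) (d : nat) (rho : 'M[C]_d).
Hypotheses (rho_herm : adjmx rho = rho)
  (rho_psd : forall v : 'cV[C]_d, 0 <= (adjmx v *m rho *m v) 0 0).

Definition trform (U V : 'M[C]_d) := \tr (U *m rho *m adjmx V).

Lemma trformDl U1 U2 V : trform (U1 + U2) V = trform U1 V + trform U2 V.
Proof. by rewrite /trform !mulmxDl mxtraceD. Qed.

Lemma trformDr U V1 V2 : trform U (V1 + V2) = trform U V1 + trform U V2.
Proof. by rewrite /trform adjmxD mulmxDr mxtraceD. Qed.

Lemma trformZl a U V : trform (a *: U) V = a * trform U V.
Proof. by rewrite /trform -!scalemxAl mxtraceZ. Qed.

Lemma trformZr a U V : trform U (a *: V) = a^* * trform U V.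
Proof. by rewrite /trform adjmxZ -scalemxAr mxtraceZ. Qed.

Lemma trformBl U1 U2 V : trform (U1 - U2) V = trform U1 V - trform U2 V.
Proof. by rewrite -scaleN1r trformDl trformZl mulN1r. Qed.

Lemma trformBr U V1 V2 : trform U (V1 - V2) = trform U V1 - trform U V2.
Proof. by rewrite -scaleN1r trformDr trformZr rmorphN1 mulN1r. Qed.

Lemma trform_conj U V : (trform U V)^* = trform V U.
Proof. by rewrite /trform -mxtrace_adjmx !adjmxM adjmxK rho_herm mulmxA. Qed.

Lemma trform_ge0 U : 0 <= trform U U.
Proof.
rewrite /trform /mxtrace; apply: sumr_ge0 => i _.
have := rho_psd (adjmx (row i U)); rewrite adjmxK !mxE.
congr (0 <= _); apply: eq_bigr => j _; rewrite !mxE; congr (_ * _).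
by apply: eq_bigr => k _; rewrite !mxE.
Qed.

Lemma trform_mulmx (X Y U V : 'M[C]_d) :
  trform (X *m U) (Y *m V) = \tr ((adjmx Y *m X) *m (U *m rho *m adjmx V)).
Proof. by rewrite /trform adjmxM !mulmxA mxtrace_mulC !mulmxA. Qed.

Lemma trform_contraction (Z R U : 'M[C]_d) : adjmx Z *m Z + adjmx R *m R = 1%:M ->
  trform (Z *m U) (Z *m U) <= trform U U.
Proof.
move=> ZR1; have -> : trform U U = trform (Z *m U) (Z *m U) + trform (R *m U) (R *m U).
  by rewrite !trform_mulmx -mxtraceD -mulmxDl ZR1 mul1mx.
by rewrite lerDl trform_ge0.
Qed.

Lemma trform_isometry (O U : 'M[C]_d) : adjmx O *m O = 1%:M ->
  trform (O *m U) (O *m U) = trform U U.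
Proof. by move=> O1; rewrite trform_mulmx O1 mul1mx. Qed.

Lemma trform_proj (Q : 'M[C]_d) : adjmx Q = Q -> Q *m Q = Q -> trform Q Q = \tr (Q *m rho).
Proof. by move=> Qh QQ; rewrite /trform Qh mxtrace_mulC mulmxA QQ. Qed.

Lemma trform1 : trform 1%:M 1%:M = \tr rho.
Proof. by rewrite /trform adjmx1 mul1mx mulmx1. Qed.

(* AM-GM, from the positivity of [trform (mu U - V) (mu U - V)]. *)
Lemma trform_cross_le mu U V : 0 < mu ->
  trform U V + trform V U <= mu * trform U U + mu^-1 * trform V V.
Proof.
move=> mu_gt0; have mu_conj : mu^* = mu by rewrite conj_Creal ?gtr0_real.
rewrite -subr_ge0.
have -> : mu * trform U U + mu^-1 * trform V V - (trform U V + trform V U)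
    = mu^-1 * trform (mu *: U - V) (mu *: U - V).
  by rewrite trformBl !trformBr !trformZl !trformZr mu_conj; field; rewrite gt_eqF.
by rewrite mulr_ge0 ?trform_ge0 // invr_ge0 ltW.
Qed.

Lemma trform_subr_le U V :
  trform (U - V) (U - V) <= 2 * (trform U U + trform V V).
Proof.
rewrite -subr_ge0.
have -> : 2 * (trform U U + trform V V) - trform (U - V) (U - V)
    = trform (U + V) (U + V).
  by rewrite !trformBl !trformBr !trformDl !trformDr; ring.
exact: trform_ge0.
Qed.

Section ProjectiveMeasurement.
Variables (I : finType) (P : I -> 'M[C]_d).
Hypothesis P_meas : projmeas P.

Lemma projmeas_trace_ge0 i : 0 <= \tr (P i *m rho).
Proof.
have [P_herm P_orth _] := P_meas.
by rewrite -trform_proj ?trform_ge0 ?P_orth ?eqxx.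
Qed.

Lemma projmeas_trace_sum : \sum_i \tr (P i *m rho) = \tr rho.
Proof. by have [_ _ P_sum] := P_meas; rewrite -raddf_sum -mulmx_suml P_sum mul1mx. Qed.

Lemma projmeas_trace_le i : \tr (P i *m rho) <= \tr rho.
Proof.
rewrite -projmeas_trace_sum (bigD1 i) //= lerDl.
by apply: sumr_ge0 => j _; apply: projmeas_trace_ge0.
Qed.

End ProjectiveMeasurement.

Section Disturbance.
Variables (O Pi Z R : 'M[C]_d) (s : C).
Hypotheses (O_herm : adjmx O = O) (O_unitary : adjmx O *m O = 1%:M).
Hypotheses (Pi_herm : adjmx Pi = Pi) (Pi_idem : Pi *m Pi = Pi) (O_Pi : O *m Pi = s *: Pi).
Hypotheses (s_conj : s^* = s) (s_sqr : s ^+ 2 = 1).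
Hypothesis Z_contraction : adjmx Z *m Z + adjmx R *m R = 1%:M.

Lemma trform_off_eigen_le :
  trform (O - s *: 1%:M) (O - s *: 1%:M) <= 4 * (\tr rho - \tr (Pi *m rho)).
Proof.
pose Q := 1%:M - Pi.
have Q_herm : adjmx Q = Q by rewrite adjmxB adjmx1 Pi_herm.
have Q_idem : Q *m Q = Q.
  by rewrite mulmxBl mul1mx mulmxBr mulmx1 Pi_idem subrr subr0.
have -> : O - s *: 1%:M = O *m Q - s *: Q.
  by rewrite /Q mulmxBr mulmx1 O_Pi scalerBr opprB addrA subrK.
apply: le_trans (trform_subr_le _ _) _.
rewrite trform_isometry // trformZl trformZr s_conj mulrA -expr2 s_sqr mul1r.
rewrite trform_proj // mulmxBl mul1mx raddfB /=.
by rewrite mulrDr -mulrDl -natrD.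
Qed.

Lemma disturbance_expand F : O = s *: 1%:M + F ->
  \tr ((O *m rho *m O - rho) *m Z) = trform Z (s *: F) + trform (Z *m F) O.
Proof.
move=> O_dev.
have -> : \tr ((O *m rho *m O - rho) *m Z) = trform (Z *m O) O - trform Z 1%:M.
  rewrite /trform O_herm adjmx1 mulmx1 mulmxBl raddfB /= mxtrace_mulC.
  by rewrite [\tr (rho *m Z)]mxtrace_mulC !mulmxA.
rewrite O_dev mulmxDr -scalemxAr mulmx1 !trformDl !trformDr.
rewrite !trformZl !trformZr s_conj [s * (s * _)]mulrA -expr2 s_sqr mul1r.
ring.
Qed.

Lemma disturbance_le mu : 0 < mu ->
  \tr ((O *m rho *m O - rho) *m Z) + (\tr ((O *m rho *m O - rho) *m Z))^*
    <= 2 * (mu * \tr rho + mu^-1 * (4 * (\tr rho - \tr (Pi *m rho)))).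
Proof.
move=> mu_gt0; have mu_ge0 := ltW mu_gt0.
have muV_ge0 : 0 <= mu^-1 by rewrite invr_ge0.
set F := O - s *: 1%:M; set delta := \tr rho - \tr (Pi *m rho).
rewrite (@disturbance_expand F); last by rewrite addrC subrK.
rewrite rmorphD /= !trform_conj.
have -> : trform Z (s *: F) + trform (Z *m F) O + (trform (s *: F) Z + trform O (Z *m F))
    = (trform Z (s *: F) + trform (s *: F) Z) + (trform O (Z *m F) + trform (Z *m F) O).
  by ring.
apply: le_trans (lerD (trform_cross_le _ _ mu_gt0) (trform_cross_le _ _ mu_gt0)) _.
have Z_Z : trform Z Z <= \tr rho.
  by have := trform_contraction 1%:M Z_contraction; rewrite mulmx1 trform1.
have O_O : trform O O = \tr rho.
  by have := trform_isometry 1%:M O_unitary; rewrite mulmx1 trform1.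
have sF_sF : trform (s *: F) (s *: F) = trform F F.
  by rewrite trformZl trformZr s_conj mulrA -expr2 s_sqr mul1r.
have ZF_ZF : trform (Z *m F) (Z *m F) <= 4 * delta.
  exact: le_trans (trform_contraction F Z_contraction) trform_off_eigen_le.
have F_F : trform F F <= 4 * delta := trform_off_eigen_le.
rewrite O_O sF_sF; apply: le_trans
  (lerD (lerD (ler_wpM2l mu_ge0 Z_Z) (ler_wpM2l muV_ge0 F_F))
        (lerD (lexx _) (ler_wpM2l muV_ge0 ZF_ZF))) _.
by rewrite (mulr_natl _ 2) mulr2n.
Qed.

End Disturbance.

End TraceForm.

Section TraceNormDual.
Variables (C : numClosedFieldType) (d : nat).

Section PartialIsometry.
Variables (Y : 'M[C]_d) (s : 'rV[C]_d).
Hypotheses (Y_gram : adjmx Y *m Y = diag_mx s) (s_ge0 : forall i, 0 <= s 0 i).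

Let v := \row_i (sqrtC (s 0 i))^-1.

Let v_conj : map_mx Num.conj v = v.
Proof.
by apply/matrixP => i j; rewrite !mxE conj_Creal // realV sqrtC_real.
Qed.

Lemma partial_isometry_diag :
  let W := Y *m diag_mx v in W *m (adjmx W *m W) = W.
Proof.
rewrite /= adjmxM adjmx_diag v_conj !mulmxA -(mulmxA _ (adjmx Y)) Y_gram.
rewrite -!mulmxA !mulmx_diag; congr (_ *m diag_mx _); apply/matrixP => i j.
rewrite !mxE; move: (s 0 j) => a; rewrite -{3}(sqrtCK a).
have [-> | r_neq0] := eqVneq (sqrtC a) 0; first by rewrite invr0 mul0r.
by field.
Qed.

Lemma partial_isometry_trace :
  \tr (Y *m adjmx (Y *m diag_mx v)) = \sum_i sqrtC (s 0 i).
Proof.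
rewrite adjmxM adjmx_diag v_conj mulmxA mxtrace_mulC mulmxA Y_gram.
rewrite mulmx_diag mxtrace_diag; apply: eq_bigr => i _; rewrite !mxE.
move: (s 0 i) => a; rewrite -{1}(sqrtCK a) expr2.
have [-> | r_neq0] := eqVneq (sqrtC a) 0; first by rewrite !mul0r.
by rewrite mulfK.
Qed.

End PartialIsometry.

Lemma gram_spectral (X : 'M[C]_d) :
  let Q := spectralmx (adjmx X *m X) in
  Q *m adjmx Q = 1%:M /\
  adjmx (X *m adjmx Q) *m (X *m adjmx Q) = diag_mx (spectral_diag (adjmx X *m X)).
Proof.
move=> Q; have Q_unitary : Q *m adjmx Q = 1%:M.
  by rewrite adjmx_trmxC; apply/unitarymxP/spectral_unitarymx.
split=> //; have /orthomx_spectralP : adjmx X *m X \is normalmx.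
  by apply/normalmxP; rewrite -adjmx_trmxC adjmxM adjmxK.
rewrite invmx_unitary ?spectral_unitarymx // -adjmx_trmxC -/Q => gramE.
rewrite adjmxM adjmxK !mulmxA -(mulmxA Q) {1}gramE !mulmxA Q_unitary mul1mx.
by rewrite -mulmxA Q_unitary mulmx1.
Qed.

Lemma spectral_diag_gram_ge0 (X : 'M[C]_d) i : 0 <= spectral_diag (adjmx X *m X) 0 i.
Proof.
have [_ /(congr1 (fun M : 'M[C]_d => M i i))] := gram_spectral X.
rewrite /= !mxE eqxx mulr1n => <-.
by apply: sumr_ge0 => k _; rewrite !mxE mulrC mul_conjC_ge0.
Qed.

Lemma trnorm_ge0 (X : 'M[C]_d) : 0 <= trnorm X.
Proof. by apply: sumr_ge0 => i _; rewrite sqrtC_ge0 spectral_diag_gram_ge0. Qed.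

Lemma trnorm_dual (X : 'M[C]_d) : exists Z R : 'M[C]_d,
  trnorm X = \tr (X *m Z) /\ adjmx Z *m Z + adjmx R *m R = 1%:M.
Proof.
have [Q_unitary gramE] := gram_spectral X.
set Q := spectralmx _ in Q_unitary gramE; set Y := X *m adjmx Q in gramE.
have W_pi := partial_isometry_diag gramE (spectral_diag_gram_ge0 X).
have W_tr := partial_isometry_trace gramE (spectral_diag_gram_ge0 X).
set W := Y *m _ in W_pi W_tr.
pose Pi := W *m adjmx W.
have Pi_herm : adjmx Pi = Pi by rewrite adjmxM adjmxK.
have Pi_idem : Pi *m Pi = Pi by rewrite mulmxA -(mulmxA W) W_pi.
exists (adjmx Q *m adjmx W), (1%:M - Pi); split.
  by rewrite mulmxA W_tr.
rewrite adjmxB adjmx1 Pi_herm adjmxM !adjmxK mulmxA -(mulmxA W) Q_unitary mulmx1.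
by rewrite mulmxBl mul1mx mulmxBr mulmx1 Pi_idem subrr subr0 addrC subrK.
Qed.

End TraceNormDual.

Section SignedObservable.
Variables (C : numClosedFieldType) (d : nat) (I : finType).
Variables (P : I -> 'M[C]_d) (sgn : I -> C).
Hypotheses (P_meas : projmeas P) (sgn_conj : forall i, (sgn i)^* = sgn i)
  (sgn_sqr : forall i, sgn i ^+ 2 = 1).

Lemma signed_obs_herm : adjmx (\sum_i sgn i *: P i) = \sum_i sgn i *: P i.
Proof.
have [P_herm _ _] := P_meas.
by rewrite adjmx_sum; apply: eq_bigr => i _; rewrite adjmxZ P_herm sgn_conj.
Qed.

Lemma signed_obs_eigen j : (\sum_i sgn i *: P i) *m P j = sgn j *: P j.
Proof.
have [_ P_orth _] := P_meas.
rewrite mulmx_suml (bigD1 j) //= big1 ?addr0 => [|i /negPf i_neq_j].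
  by rewrite -scalemxAl P_orth eqxx.
by rewrite -scalemxAl P_orth i_neq_j scaler0.
Qed.

Lemma signed_obs_unitary :
  adjmx (\sum_i sgn i *: P i) *m (\sum_i sgn i *: P i) = 1%:M.
Proof.
have [_ _ P_sum] := P_meas.
rewrite signed_obs_herm mulmx_sumr -P_sum; apply: eq_bigr => i _.
by rewrite -scalemxAr signed_obs_eigen scalerA -expr2 sgn_sqr scale1r.
Qed.

End SignedObservable.

Section WeylObservable.
Variables (C : numClosedFieldType) (d n : nat).
Variables (P : bool -> {ffun 'I_n -> bool} -> 'M[C]_d) (W : bool) (b : {ffun 'I_n -> bool}).
Hypothesis P_meas : projmeas (P W).

Let sgn (u : {ffun 'I_n -> bool}) : C := (-1) ^+ (\sum_i (u i && b i))%N.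

Let sgn_conj u : (sgn u)^* = sgn u.
Proof. by rewrite rmorphXn rmorphN1. Qed.

Let sgn_sqr u : sgn u ^+ 2 = 1.
Proof. exact: sqrr_sign. Qed.

Lemma Wobs_herm : adjmx (Wobs P W b) = Wobs P W b.
Proof. exact: signed_obs_herm (P W) sgn P_meas sgn_conj. Qed.

Lemma Wobs_unitary : adjmx (Wobs P W b) *m Wobs P W b = 1%:M.
Proof. exact: signed_obs_unitary (P W) sgn P_meas sgn_conj sgn_sqr. Qed.

Lemma Wobs_eigen u : Wobs P W b *m P W u = sgn u *: P W u.
Proof. exact: signed_obs_eigen (P W) sgn P_meas u. Qed.

End WeylObservable.

Section FirstRound.
Variables (C : numClosedFieldType) (SK Ct Al : finType).
Variables (pGen : SK -> C) (pEnc : SK -> bool -> Ct -> C) (W : bool).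
Hypotheses (pGen_distr : distr pGen) (pEnc_distr : forall sk W, distr (pEnc sk W)).

Definition round_mean (f : SK -> Ct -> Al -> C) : C :=
  \sum_sk pGen sk * \sum_c pEnc sk W c * \sum_a f sk c a.

Lemma round_meanD f g :
  round_mean (fun sk c a => f sk c a + g sk c a) = round_mean f + round_mean g.
Proof.
rewrite /round_mean -big_split; apply: eq_bigr => sk _ /=.
rewrite -mulrDr -big_split; congr (_ * _); apply: eq_bigr => c _ /=.
by rewrite -mulrDr -big_split.
Qed.

Lemma round_meanZ x f :
  round_mean (fun sk c a => x * f sk c a) = x * round_mean f.
Proof.
rewrite /round_mean mulr_sumr; apply: eq_bigr => sk _.
rewrite [RHS]mulrCA [in RHS]mulr_sumr; congr (_ * _); apply: eq_bigr => c _.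
by rewrite [RHS]mulrCA [in RHS]mulr_sumr.
Qed.

Lemma round_meanB f g :
  round_mean (fun sk c a => f sk c a - g sk c a) = round_mean f - round_mean g.
Proof.
rewrite /round_mean -sumrB; apply: eq_bigr => sk _ /=.
rewrite -mulrBr -sumrB; congr (_ * _); apply: eq_bigr => c _ /=.
by rewrite -mulrBr -sumrB.
Qed.

Lemma ler_round_mean f g : (forall sk c a, f sk c a <= g sk c a) ->
  round_mean f <= round_mean g.
Proof.
move=> le_fg; have [pGen_ge0 _] := pGen_distr.
apply: ler_sum => sk _; apply: ler_wpM2l => //.
have [pEnc_ge0 _] := pEnc_distr sk W.
by apply: ler_sum => c _; apply: ler_wpM2l => //; apply: ler_sum.
Qed.

Lemma round_mean_conj f :
  (round_mean f)^* = round_mean (fun sk c a => (f sk c a)^*).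
Proof.
have [pGen_ge0 _] := pGen_distr.
rewrite /round_mean rmorph_sum; apply: eq_bigr => sk _.
rewrite rmorphM /= geC0_conj // rmorph_sum; congr (_ * _); apply: eq_bigr => c _.
have [pEnc_ge0 _] := pEnc_distr sk W.
by rewrite rmorphM /= geC0_conj // rmorph_sum.
Qed.

Lemma round_mean_normalized f : (forall sk c, \sum_a f sk c a = 1) ->
  round_mean f = 1.
Proof.
move=> f_sum; have [_ <-] := pGen_distr; apply: eq_bigr => sk _.
have [_ pEnc_sum] := pEnc_distr sk W.
by rewrite -[RHS]mulr1 -pEnc_sum; congr (_ * _); apply: eq_bigr => c _; rewrite f_sum mulr1.
Qed.

End FirstRound.

Section Game.
Variables (C : numClosedFieldType) (n d : nat) (SK Ct Al : finType).
Variables (pGen : SK -> C) (pEnc : SK -> bool -> Ct -> C)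
  (Dec : SK -> Al -> {ffun 'I_n -> bool}) (D : {ffun 'I_n -> option bool} -> C)
  (psi : 'M[C]_d) (A : Ct -> Al -> 'M[C]_d)
  (P : bool -> {ffun 'I_n -> bool} -> 'M[C]_d)
  (M : {ffun 'I_n -> option bool} -> {ffun 'I_n -> bool} -> 'M[C]_d).
Hypotheses (pGen_distr : distr pGen) (pEnc_distr : forall sk W, distr (pEnc sk W))
  (D_distr : distr D) (psi_density : density psi)
  (A_meas : forall c, projmeas (fun a => adjmx (A c a) *m A c a))
  (P_meas : forall W, projmeas (P W)) (M_meas : forall w, projmeas (M w)).

Lemma postst_herm c a : adjmx (postst A psi c a) = postst A psi c a.
Proof. by have [psi_herm _ _] := psi_density; rewrite !adjmxM adjmxK psi_herm mulmxA. Qed.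

Lemma postst_psd c a : forall v : 'cV[C]_d, 0 <= (adjmx v *m postst A psi c a *m v) 0 0.
Proof.
move=> v; have [_ psi_psd _] := psi_density; have := psi_psd (adjmx (A c a) *m v).
by rewrite adjmxM adjmxK /postst !mulmxA.
Qed.

Lemma mxtrace_postst_sum c : \sum_a \tr (postst A psi c a) = 1.
Proof.
have [_ _ psi_tr] := psi_density; have [_ _ A_sum] := A_meas c.
rewrite -psi_tr -[psi in RHS]mul1mx -A_sum mulmx_suml raddf_sum.
by apply: eq_bigr => a _; rewrite /postst mxtrace_mulC !mulmxA.
Qed.

Lemma round_mean_trace_postst W :
  round_mean pGen pEnc W (fun _ c a => \tr (postst A psi c a)) = 1.
Proof. by apply: round_mean_normalized => // _ c; apply: mxtrace_postst_sum. Qed.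

Lemma mxtrace_psiEnc_mulmx W (K : 'M[C]_d) :
  \tr (psiEnc pGen pEnc A psi W *m K)
    = round_mean pGen pEnc W (fun _ c a => \tr (postst A psi c a *m K)).
Proof.
rewrite mulmx_suml raddf_sum /=; apply: eq_bigr => sk _.
rewrite -scalemxAl mxtraceZ mulmx_suml raddf_sum /=; congr (_ * _).
by apply: eq_bigr => c _; rewrite -scalemxAl mxtraceZ mulmx_suml raddf_sum.
Qed.

Definition pure_pass W sk c a := \tr (P W (Dec sk a) *m postst A psi c a).

Definition mixed_pass W sk c a :=
  \sum_(w : {ffun 'I_n -> option bool}) D w *
    \sum_(v : {ffun 'I_n -> bool})
      (if [forall i, (w i == Some W) ==> (Dec sk a i == v i)]
       then \tr (M w v *m postst A psi c a) else 0).

Lemma winprobE : winprob pGen pEnc Dec D A psi P M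
  = \sum_W 2^-1 * round_mean pGen pEnc W
      (fun sk c a => 2^-1 * pure_pass W sk c a + 2^-1 * mixed_pass W sk c a).
Proof.
rewrite /winprob; under eq_bigr do rewrite mulr_sumr.
rewrite exchange_big; apply: eq_bigr => W _; rewrite /round_mean mulr_sumr.
by apply: eq_bigr => sk _; rewrite mulrCA.
Qed.

Lemma mixed_pass_le W sk c a : mixed_pass W sk c a <= \tr (postst A psi c a).
Proof.
have [D_ge0 D_sum] := D_distr.
rewrite -[leRHS]mul1r -D_sum mulr_suml; apply: ler_sum => w _.
rewrite ler_wpM2l // -(projmeas_trace_sum _ (M_meas w)); apply: ler_sum => v _.
case: ifP => _ //.
by have := projmeas_trace_ge0 (postst_psd c a) (M_meas w) v.
Qed.

Lemma pure_pass_le1 W : round_mean pGen pEnc W (pure_pass W) <= 1.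
Proof.
rewrite -(round_mean_trace_postst W); apply: ler_round_mean => // sk c a.
by have := projmeas_trace_le (postst_psd c a) (P_meas W) (Dec sk a).
Qed.

Lemma round_mean_pass_le W :
  round_mean pGen pEnc W
    (fun sk c a => 2^-1 * pure_pass W sk c a + 2^-1 * mixed_pass W sk c a)
  <= 2^-1 * round_mean pGen pEnc W (pure_pass W) + 2^-1.
Proof.
have half_ge0 : 0 <= 2^-1 :> C by rewrite invr_ge0 ler0n.
apply: le_trans (ler_round_mean W pGen_distr pEnc_distr
  (g := fun sk c a => 2^-1 * pure_pass W sk c a + 2^-1 * \tr (postst A psi c a)) _) _.
  by move=> sk c a; rewrite lerD2l ler_wpM2l ?mixed_pass_le.
by rewrite round_meanD !round_meanZ round_mean_trace_postst mulr1.
Qed.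

(* Only the pure-basis check of question [W] matters; every other check is
   bounded by 1. *)
Lemma winprob_le W : winprob pGen pEnc Dec D A psi P M
  <= 4^-1 * round_mean pGen pEnc W (pure_pass W) + 3 / 4.
Proof.
have half_ge0 : 0 <= 2^-1 :> C by rewrite invr_ge0 ler0n.
have pass_le W' := ler_wpM2l half_ge0 (round_mean_pass_le W').
have other_le : 2^-1 * round_mean pGen pEnc (~~ W)
    (fun sk c a => 2^-1 * pure_pass (~~ W) sk c a + 2^-1 * mixed_pass (~~ W) sk c a)
    <= 2^-1 * (2^-1 * 1 + 2^-1).
  apply: le_trans (pass_le _) _; rewrite ler_wpM2l // lerD2r ler_wpM2l //.
  exact: pure_pass_le1.
have -> : 4^-1 * round_mean pGen pEnc W (pure_pass W) + 3 / 4
    = 2^-1 * (2^-1 * round_mean pGen pEnc W (pure_pass W) + 2^-1)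
      + 2^-1 * (2^-1 * 1 + 2^-1 :> C).
  by field.
rewrite winprobE big_bool; case: W pass_le other_le => /= pass_le other_le.
  exact: lerD (pass_le true) other_le.
by rewrite [leRHS]addrC; apply: lerD other_le (pass_le false).
Qed.

Lemma pure_pass_fail_le W eps : winprob pGen pEnc Dec D A psi P M = 1 - eps ->
  1 - round_mean pGen pEnc W (pure_pass W) <= 4 * eps.
Proof.
move=> win_eps; have := winprob_le W; rewrite win_eps -subr_ge0 => win_le.
rewrite -subr_ge0.
have -> : 4 * eps - (1 - round_mean pGen pEnc W (pure_pass W))
    = 4 * (4^-1 * round_mean pGen pEnc W (pure_pass W) + 3 / 4 - (1 - eps)) by field.
by rewrite pmulr_rge0 ?ltr0n.
Qed.

Lemma trnorm_disturbance_le W b mu : 0 < mu ->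
  trnorm (Wobs P W b *m psiEnc pGen pEnc A psi W *m Wobs P W b
          - psiEnc pGen pEnc A psi W)
  <= mu + mu^-1 * (4 * (1 - round_mean pGen pEnc W (pure_pass W))).
Proof.
move=> mu_gt0; set O := Wobs P W b; set rho := psiEnc _ _ _ _ _.
have [P_herm P_orth _] := P_meas W.
have [Z [R [tn_eq ZR1]]] := trnorm_dual (O *m rho *m O - rho).
have tn_real := geC0_conj (trnorm_ge0 (O *m rho *m O - rho)).
pose K := O *m Z *m O - Z.
have trK X : \tr ((O *m X *m O - X) *m Z) = \tr (X *m K).
  by rewrite mulmxBl mulmxBr !raddfB /= -!mulmxA mxtrace_mulC !mulmxA.
rewrite -(ler_pM2l (ltr0Sn _ 1)) (mulr_natl _ 2) mulr2n.
rewrite -[X in _ + X <= _]tn_real tn_eq trK mxtrace_psiEnc_mulmx.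
rewrite (round_mean_conj W pGen_distr pEnc_distr) -round_meanD.
apply: le_trans (ler_round_mean W pGen_distr pEnc_distr (g := fun sk c a =>
    2 * (mu * \tr (postst A psi c a)
         + mu^-1 * (4 * (\tr (postst A psi c a) - pure_pass W sk c a)))) _) _.
  move=> sk c a; rewrite -trK.
  apply: (disturbance_le (postst_herm c a) (postst_psd c a) (Wobs_herm b (P_meas W))
    (Wobs_unitary b (P_meas W)) (P_herm _) _ (Wobs_eigen b (P_meas W) _) _ _ ZR1 mu_gt0).
  - by rewrite P_orth eqxx.
  - exact: conj_Creal (rpredX _ (@rpredN1 _ _)).
  - exact: sqrr_sign.
by rewrite round_meanZ round_meanD !round_meanZ round_meanB round_mean_trace_postst mulr1.
Qed.

End Game.

Theorem mainTheorem8 :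
  exists K : nat,
  forall (C : numClosedFieldType) (n d : nat) (SK Ct Al : finType)
    (pGen : SK -> C) (pEnc : SK -> bool -> Ct -> C)
    (Dec : SK -> Al -> {ffun 'I_n -> bool})
    (D : {ffun 'I_n -> option bool} -> C)
    (psi : 'M[C]_d) (A : Ct -> Al -> 'M[C]_d)
    (P : bool -> {ffun 'I_n -> bool} -> 'M[C]_d)
    (M : {ffun 'I_n -> option bool} -> {ffun 'I_n -> bool} -> 'M[C]_d)
    (eps : C),
    distr pGen ->
    (forall sk W, distr (pEnc sk W)) ->
    distr D ->
    density psi ->
    (forall c, projmeas (fun a => adjmx (A c a) *m A c a)) ->
    (forall W, projmeas (P W)) ->
    (forall w, projmeas (M w)) ->
    (forall (w : {ffun 'I_n -> option bool}) (u : {ffun 'I_n -> bool}), (exists i, w i = None /\ u i = true) -> M w u = 0) ->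
    winprob pGen pEnc Dec D A psi P M = 1 - eps ->
    forall (b : {ffun 'I_n -> bool}) (W : bool),
      trnorm (Wobs P W b *m psiEnc pGen pEnc A psi W *m Wobs P W b
              - psiEnc pGen pEnc A psi W)
      <= K%:R * sqrtC eps.
Proof.
exists 8%N => C n d SK Ct Al pGen pEnc Dec D psi A P M eps pGen_distr pEnc_distr
  D_distr psi_density A_meas P_meas M_meas _ win_eps b W.
have fail_le := pure_pass_fail_le pGen_distr pEnc_distr D_distr psi_density
  A_meas P_meas M_meas W win_eps.
have eps_ge0 : 0 <= eps.
  rewrite -(pmulr_rge0 _ (ltr0Sn _ 3)); apply: le_trans fail_le.
  by rewrite subr_ge0 (pure_pass_le1 Dec pGen_distr pEnc_distr psi_density A_meas P_meas).
have -> : 8%:R * sqrtC eps = (4 * sqrtC eps) *+ 2 by rewrite -mulrnAl -mulrnA.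
apply: ler_add_sqr_div_inf => [|mu mu_gt0]; first by rewrite mulr_ge0 ?sqrtC_ge0.
apply: le_trans (trnorm_disturbance_le Dec pGen_distr pEnc_distr psi_density A_meas
  P_meas W b mu_gt0) _.
by rewrite lerD2l exprMn sqrtCK [leRHS]mulrC ler_pM2l ?invr_gt0 // expr2 -mulrA ler_pM2l ?ltr0n.
Qed.
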